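(* Let $f_{s_1d}, f_{s_1r}, f_{rd}, g_{rd}^{s_1}, g_{s_1d}^{r}\in[0,1]$ satisfy $0\le g_{s_1d}^{r}\le f_{s_1d}$, $0\le g_{rd}^{s_1}< f_{rd}$, set $T_1=(1-f_{s_1d})f_{s_1r}$ and assume $T_1>0$. For $\alpha\in[0,1]$ define $$\mu_1^{\mathrm{DBC}}(\alpha)=(1-\alpha)(f_{s_1d}+T_1)+\alpha\,g_{s_1d}^{r},\qquad \mu_{u_1}^{\mathrm{DBC}}(\alpha)=\frac{\alpha f_{rd}}{(1-\alpha)T_1+\alpha f_{rd}-\alpha\,g_{rd}^{s_1}}\,\mu_1^{\mathrm{DBC}}(\alpha).$$ If $$f_{rd}-g_{rd}^{s_1}\le \frac{(T_1+g_{rd}^{s_1})^2(f_{s_1d}+T_1)}{T_1(f_{s_1d}+T_1-g_{s_1d}^{r})}-(T_1+2g_{rd}^{s_1}),$$ then $$\max_{0\le\alpha\le 1}\min\{\mu_1^{\mathrm{DBC}}(\alpha),\mu_{u_1}^{\mathrm{DBC}}(\alpha)\}=\Big(1-\frac{T_1}{T_1+g_{rd}^{s_1}}\Big)(f_{s_1d}+T_1)+\frac{T_1}{T_1+g_{rd}^{s_1}}\,g_{s_1d}^{r},$$ attained at $\alpha^*=T_1/(T_1+g_{rd}^{s_1})$.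
   Context: $f_{mn}$ denotes the probability that link $(m,n)$ is not in outage and $g_{mn}^{I}$ the probability that it is not in outage under simultaneous interference from node $I$ (so $g_{mn}^I\le f_{mn}$). This is the optimization of the maximal stable throughput of a single source $s_1$ in the decision-based cooperative scheme over the probability $\alpha$ that the relay (without sensing) transmits in a slot. *)

From Stdlib Require Import Reals Lra.
Open Scope R_scope.

Definition T1 (fs1d fs1r : R) : R := (1 - fs1d) * fs1r.

Definition mu1 (fs1d fs1r gs1dr alpha : R) : R :=
  (1 - alpha) * (fs1d + T1 fs1d fs1r) + alpha * gs1dr.

Definition muu1 (fs1d fs1r frd grds1 gs1dr alpha : R) : R :=
  alpha * frd / ((1 - alpha) * T1 fs1d fs1r + alpha * frd - alpha * grds1)
  * mu1 fs1d fs1r gs1dr alpha.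

(* Write s = T1 + g_rd^{s1}, c = f_s1d + T1 - g_s1d^r and astar = T1 / s, so that
   T1 = astar s, mu_1 is the line F - c alpha and the denominator of mu_u1 becomes
   astar s + alpha (f_rd - s).  At alpha = astar this denominator is astar f_rd, so the two
   rates cross there.  For alpha >= astar the decreasing line mu_1 stays below its
   value at astar; for alpha < astar the deficit of mu_u1 is the quadratic
   P (alpha - astar) + f_rd c (alpha - astar)^2 with P = c astar (f_rd + s) - F s, and the
   hypothesis on f_rd - g_rd^{s1} is exactly P <= 0. *)
From Stdlib Require Import Reals Lra.
Open Scope R_scope.

Lemma Rmin_le_of_crossing (f h : R -> R) (a v x : R) :
  (forall y, a <= y -> f y <= v) -> (forall y, 0 <= y < a -> h y <= v) ->
  0 <= x -> Rmin (f x) (h x) <= v.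
Proof.
  intros Hf Hh Hx; destruct (Rle_lt_dec a x) as [Hax | Hxa].
  - exact (Rle_trans _ _ _ (Rmin_l _ _) (Hf x Hax)).
  - exact (Rle_trans _ _ _ (Rmin_r _ _) (Hh x (conj Hx Hxa))).
Qed.

Lemma mul_le_of_le_div_sub (x y q d : R) : 0 < d -> x <= q / d - y -> d * (x + y) <= q.
Proof.
  intros Hd Hx.
  apply (Rmult_le_compat_l d) in Hx; [| lra].
  replace (d * (q / d - y)) with (q - d * y) in Hx by (field; lra).
  lra.
Qed.

Section Crossing.

Variables (a s F c frd : R).
Hypotheses (Hs : 0 < s) (Hc : 0 <= c) (Hfrd : 0 <= frd).
Hypothesis Hcross : c * a * (frd + s) <= F * s.

Lemma crossing_deficit (alpha : R) :
  (F - c * a) * (a * s + alpha * (frd - s)) - alpha * frd * (F - c * alpha)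
  = (c * a * (frd + s) - F * s) * (alpha - a) + frd * c * (alpha - a) ^ 2.
Proof. ring. Qed.

Lemma relay_rate_le_crossing (alpha : R) :
  0 <= alpha < a ->
  alpha * frd / (a * s + alpha * (frd - s)) * (F - c * alpha) <= F - c * a.
Proof.
  intros Halpha.
  assert (Hden : 0 < a * s + alpha * (frd - s)) by nra.
  assert (Hsq : 0 <= frd * c * (alpha - a) ^ 2)
    by (apply Rmult_le_pos; [nra | apply pow2_ge_0]).
  assert (Hlin : 0 <= (c * a * (frd + s) - F * s) * (alpha - a)) by nra.
  pose proof (crossing_deficit alpha) as Hdef.
  unfold Rdiv; rewrite Rmult_assoc, (Rmult_comm (/ _)), <- Rmult_assoc.
  apply (Rmult_le_reg_r _ _ _ Hden).
  rewrite Rmult_assoc, Rinv_l, Rmult_1_r by lra.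
  lra.
Qed.

End Crossing.

Lemma mu1_linear (fs1d fs1r gs1dr alpha : R) :
  mu1 fs1d fs1r gs1dr alpha
  = fs1d + T1 fs1d fs1r - (fs1d + T1 fs1d fs1r - gs1dr) * alpha.
Proof. unfold mu1; ring. Qed.

Lemma muu1_reparam (fs1d fs1r frd grds1 gs1dr a alpha : R) :
  a * (T1 fs1d fs1r + grds1) = T1 fs1d fs1r ->
  muu1 fs1d fs1r frd grds1 gs1dr alpha
  = alpha * frd / (a * (T1 fs1d fs1r + grds1) + alpha * (frd - (T1 fs1d fs1r + grds1)))
    * mu1 fs1d fs1r gs1dr alpha.
Proof.
  intros Ha; unfold muu1; rewrite Ha.
  f_equal; f_equal; ring.
Qed.

Theorem lemma2 (fs1d fs1r frd grds1 gs1dr : R) :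
  0 <= fs1d <= 1 -> 0 <= fs1r <= 1 -> 0 <= frd <= 1 ->
  0 <= grds1 <= 1 -> 0 <= gs1dr <= 1 ->
  gs1dr <= fs1d -> grds1 < frd ->
  0 < T1 fs1d fs1r ->
  frd - grds1 <=
    (T1 fs1d fs1r + grds1) ^ 2 * (fs1d + T1 fs1d fs1r)
      / (T1 fs1d fs1r * (fs1d + T1 fs1d fs1r - gs1dr))
    - (T1 fs1d fs1r + 2 * grds1) ->
  let astar := T1 fs1d fs1r / (T1 fs1d fs1r + grds1) in
  let value := (1 - astar) * (fs1d + T1 fs1d fs1r) + astar * gs1dr in
  (0 <= astar <= 1 /\
   Rmin (mu1 fs1d fs1r gs1dr astar) (muu1 fs1d fs1r frd grds1 gs1dr astar) = value /\
   forall alpha : R, 0 <= alpha <= 1 ->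
     Rmin (mu1 fs1d fs1r gs1dr alpha) (muu1 fs1d fs1r frd grds1 gs1dr alpha) <= value).
Proof.
  intros _ _ _ [Hg _] _ Hgd Hgf HT Hcond astar value.
  set (T := T1 fs1d fs1r) in *.
  set (F := fs1d + T) in *.
  set (s := T + grds1) in *.
  set (c := F - gs1dr) in *.
  assert (Hs : 0 < s) by (unfold s; lra).
  assert (Ha : astar * s = T) by (unfold astar; field; lra).
  assert (Ha_pos : 0 < astar) by (unfold astar; apply Rdiv_lt_0_compat; lra).
  assert (Ha_le1 : astar <= 1) by (unfold s in *; nra).
  assert (Hc : T <= c) by (unfold c, F; lra).
  assert (Hmu1 : forall alpha, mu1 fs1d fs1r gs1dr alpha = F - c * alpha)
    by (intros; apply mu1_linear).
  assert (Hvalue : value = F - c * astar) by (unfold value, c; ring).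
  assert (Hcross : c * astar * (frd + s) <= F * s).
  { apply mul_le_of_le_div_sub in Hcond; [| nra].
    replace (frd - grds1 + (T + 2 * grds1)) with (frd + s) in Hcond by (unfold s; ring).
    rewrite <- Ha in Hcond.
    apply (Rmult_le_reg_r s); [exact Hs | nra]. }
  split; [lra | split].
  - rewrite (muu1_reparam _ _ _ _ _ astar) by exact Ha; fold T s.
    replace (astar * s + astar * (frd - s)) with (astar * frd) by ring.
    rewrite Rdiv_diag, Rmult_1_l, Rmin_left by nra.
    rewrite Hmu1; symmetry; exact Hvalue.
  - intros alpha Halpha; rewrite Hvalue.
    apply (Rmin_le_of_crossing (mu1 fs1d fs1r gs1dr)
             (muu1 fs1d fs1r frd grds1 gs1dr) astar); [| | lra].
    + intros y Hy; rewrite Hmu1; unfold c, F in *; nra.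
    + intros y Hy.
      rewrite (muu1_reparam _ _ _ _ _ astar), Hmu1 by exact Ha; fold T s.
      apply relay_rate_le_crossing; unfold c, F in *; lra.
Qed.
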